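(* Let $R$ be a ring of the standard form below, $\omega$ its normalized homogeneous weight and $\mathcal P_{\rm hom}$ the induced partition. Then: (a) $\omega(a)\neq1$ for all $a\in\mathrm{soc}(R)$, so if $R\neq\mathrm{soc}(R)$ then $R\setminus\mathrm{soc}(R)$ is a block of $\mathcal P_{\rm hom}$; (b) there exists a nonzero $a\in R$ with $\omega(a)=0$ if and only if there is an index $i\in\{1,\dots,t\}$ with $q_i=2$ and $n_i\ge2$; and in this case $\mathcal P_{\rm hom}$ is not reflexive.
   Context: Standard form: $R=R_1\times\cdots\times R_t$ with $R_i=R_{i,1}\times\cdots\times R_{i,n_i}$, where each $R_{i,j}$ is a finite local Frobenius ring with $|R_{i,j}/\mathrm{rad}(R_{i,j})|=|\mathrm{soc}(R_{i,j})|=q_i$ for all $j$, and $q_1,\dots,q_t$ distinct ($\mathrm{rad}$ = Jacobson radical, $\mathrm{soc}$ = socle; a finite ring is Frobenius if it admits a generating character, i.e. a character $\chi$ of its additive group such that $r\mapsto(x\mapsto\chi(xr))$ is a bijection onto the character group). The normalized homogeneous weight on $R$ is the unique $\omega:R\to\mathbb Q$ with $\omega(0)=0$, $\omega(x)=\omega(y)$ whenever $Rx=Ry$, and $\sum_{y\in Rx}\omega(y)=|Rx|$ for $x\ne0$; $\mathcal P_{\rm hom}$ is the partition of $R$ into sets of elements of equal weight. For a partition $\mathcal P$ of $R$ and a generating character $\chi$, the right $\chi$-dual partition is given by $a\sim a'$ iff $\sum_{b\in P}\chi(ab)=\sum_{b\in P}\chi(a'b)$ for all blocks $P$; $\mathcal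 P$ is reflexive if the left $\chi$-dual of its right $\chi$-dual equals $\mathcal P$ (left dual: use $\chi(ba)$), equivalently if $\mathcal P$ and its right $\chi$-dual have the same number of blocks. *)

From HB Require Import structures.
From mathcomp Require Import all_boot all_order all_algebra.
From mathcomp Require Import algC.
Set Implicit Arguments. Unset Strict Implicit. Unset Printing Implicit Defensive.
Import Order.TTheory GRing.Theory Num.Theory.
Local Open Scope ring_scope.

Section FiniteRingNotions.
Variable S : finPzRingType.

Definition left_ideal (I : {set S}) : bool :=
  [&& (0 : S) \in I, [forall x in I, forall y in I, x + y \in I],
      [forall x in I, - x \in I] & [forall r : S, forall x in I, r * x \in I]].

Definition maximal_left_ideal (I : {set S}) : bool :=
  [&& left_ideal I, I != [set: S] &
      [forall J : {set S}, (left_ideal J && (I \proper J)) ==> (J == [set: S])]].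

Definition minimal_left_ideal (I : {set S}) : bool :=
  [&& left_ideal I, I != [set 0] &
      [forall J : {set S}, (left_ideal J && (J \proper I)) ==> (J == [set 0])]].

Definition jac_rad : {set S} := \bigcap_(M : {set S} | maximal_left_ideal M) M.

(* (left) socle: sum of all minimal left ideals, i.e. the smallest left
   ideal containing every minimal left ideal *)
Definition left_soc : {set S} :=
  \bigcap_(J : {set S} | left_ideal J &&
            [forall I : {set S}, minimal_left_ideal I ==> (I \subset J)]) J.

Definition local_ring : bool :=
  #|[set M : {set S} | maximal_left_ideal M]| == 1%N.

Definition card_quot (I : {set S}) : nat :=
  #|[set [set x + r | r in I] | x : S]|.

Definition is_char (chi : S -> algC) : Prop :=
  chi 0 = 1 /\ forall x y, chi (x + y) = chi x * chi y.

Definition generating_char (chi : S -> algC) : Prop :=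
  is_char chi /\
  injective (fun r : S => fun x : S => chi (x * r)) /\
  (forall psi : S -> algC, is_char psi ->
     exists r : S, forall x, psi x = chi (x * r)).

Definition frobenius : Prop := exists chi : S -> algC, generating_char chi.

Definition lprin (x : S) : {set S} := [set y * x | y : S].

Definition homogeneous_weight (w : S -> rat) : Prop :=
  [/\ w 0 = 0,
      (forall x y, lprin x = lprin y -> w x = w y) &
      (forall x, x != 0 -> \sum_(y in lprin x) w y = (#|lprin x|)%:R)].

Definition Phom (w : S -> rat) : {set {set S}} :=
  [set [set y | w y == w x] | x : S].

Definition rdual (chi : S -> algC) (P : {set {set S}}) : {set {set S}} :=
  [set [set a' | [forall B in P,
        \sum_(b in B) chi (a * b) == \sum_(b in B) chi (a' * b)]] | a : S].

Definition ldual (chi : S -> algC) (P : {set {set S}}) : {set {set S}} :=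
  [set [set a' | [forall B in P,
        \sum_(b in B) chi (b * a) == \sum_(b in B) chi (b * a')]] | a : S].

Definition reflexive_partition (chi : S -> algC) (P : {set {set S}}) : Prop :=
  ldual chi (rdual chi P) = P.

End FiniteRingNotions.

From HB Require Import structures.
From mathcomp Require Import all_boot all_order all_algebra fingroup.
From Stdlib Require Import FunctionalExtensionality.
From mathcomp Require Import algC.
Set Implicit Arguments. Unset Strict Implicit. Unset Printing Implicit Defensive.
Import Order.TTheory GRing.Theory Num.Theory.
Local Open Scope ring_scope.

(* The proof computes the
   normalized homogeneous weight w of R explicitly.
   - In a local ring S with |S / rad S| = |soc S| = q, every minimal left
     ideal S m has size |S / ann m| = |S / rad S| = q (ann m is maximal), so
     the socle, also of size q, is the unique minimal left ideal and lies in
     every nonzero principal left ideal.  Hence the co-weight of S (1 at 0,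
     -1/(q-1) on the nonzero socle elements, 0 elsewhere) sums to 0 over every
     nonzero principal left ideal.
   - Principal left ideals and the socle of R are computed componentwise, and
     the product G of the co-weights of the components again sums to 0 over
     every nonzero principal left ideal of R.  Since a homogeneous weight is
     determined by its defining properties, w = 1 - G.
   - (a) G vanishes exactly off soc R.  (b) G a = 1 for a != 0 forces every
     nonzero component of a to lie in a factor with q = 2 (co-weight -1),
     and a single such component would give G a = -1.
   - Non-reflexivity follows, for any finite ring, from a nonzero element
     having the weight of 0, by a character-sum argument. *)

Lemma card_image_pair (T A B : finType) (f : T -> A) (g : T -> B) :
  (forall x y, f x = f y -> g x = g y) ->
  #|[set f x | x : T]| = #|[set (f x, g x) | x : T]|.
Proof.
move=> fg; rewrite -(card_in_imset (f := fst)); first by rewrite -imset_comp.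
by move=> _ _ /imsetP[x _ ->] /imsetP[y _ ->] /= E; rewrite E (fg _ _ E).
Qed.

Lemma card_image_fibres (T A B : finType) (f : T -> A) (g : T -> B) :
  (forall x y, f x = f y <-> g x = g y) ->
  #|[set f x | x : T]| = #|[set g x | x : T]|.
Proof.
move=> fg; rewrite (card_image_pair (g := g)) => [|x y /fg //].
rewrite (card_image_pair (f := g) (g := f)) => [|x y /fg //].
have swap_inj : injective (fun p : A * B => (p.2, p.1)) by move=> [? ?] [? ?] [-> ->].
by rewrite -(card_imset _ swap_inj) -imset_comp.
Qed.

Lemma prod_norm_eq1 (K : numDomainType) (I : finType) (F : I -> K) :
  (forall k, `|F k| <= 1) -> `|\prod_k F k| = 1 -> forall k, `|F k| = 1.
Proof.
move=> le1 prod1 k; apply/eqP; rewrite eq_le le1 /=.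
move: prod1; rewrite normr_prod (bigD1 k) //= => <-.
rewrite -[X in _ <= X]mulr1 ler_wpM2l ?normr_ge0 // prodr_ile1 // => j _.
by rewrite normr_ge0 le1.
Qed.

Section LeftIdeals.
Variable S : finPzRingType.
Implicit Types (I J M : {set S}) (m x y : S).

Lemma left_idealP I : left_ideal I ->
  [/\ 0 \in I, forall x y, x \in I -> y \in I -> x + y \in I,
      forall x, x \in I -> - x \in I & forall r x, x \in I -> r * x \in I].
Proof.
case/and4P => I0 /forall_inP ID /forall_inP IN /forallP IM; split => //.
- by move=> x y xI yI; apply: (forall_inP (ID x xI)).
- by move=> r; apply/forall_inP/IM.
Qed.

Lemma left_idealI I : 0 \in I -> (forall x y, x \in I -> y \in I -> x + y \in I) ->
  (forall x, x \in I -> - x \in I) -> (forall r x, x \in I -> r * x \in I) ->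
  left_ideal I.
Proof.
move=> I0 ID IN IM; apply/and4P; split => //.
- by apply/forall_inP => x xI; apply/forall_inP => y; apply: ID.
- exact/forall_inP.
- by apply/forallP => r; apply/forall_inP => x; apply: IM.
Qed.

Lemma ideal0 I : left_ideal I -> 0 \in I.
Proof. by case/left_idealP. Qed.

Lemma idealM I r x : left_ideal I -> x \in I -> r * x \in I.
Proof. by case/left_idealP => _ _ _; apply. Qed.

Lemma ideal_neq0 I : left_ideal I -> I != [set 0] -> exists2 x, x \in I & x != 0.
Proof.
move=> idI I0; have : ~~ (I \subset [set 0]).
  by apply: contra I0 => I_0; rewrite eqEsubset I_0 sub1set ideal0.
by case/subsetPn => x xI; rewrite inE => x0; exists x.
Qed.

Lemma lprinP y x : reflect (exists r, y = r * x) (y \in lprin x).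
Proof. by apply: (iffP imsetP) => [[r _ ->]|[r ->]]; exists r. Qed.

Lemma lprin_refl x : x \in lprin x.
Proof. by apply/lprinP; exists 1; rewrite mul1r. Qed.

Lemma lprin_ideal x : left_ideal (lprin x).
Proof.
apply: left_idealI.
- by apply/lprinP; exists 0; rewrite mul0r.
- by move=> _ _ /lprinP[r ->] /lprinP[s ->]; apply/lprinP; exists (r + s); rewrite mulrDl.
- by move=> _ /lprinP[r ->]; apply/lprinP; exists (- r); rewrite mulNr.
- by move=> r _ /lprinP[s ->]; apply/lprinP; exists (r * s); rewrite mulrA.
Qed.

Lemma lprin_sub J x : left_ideal J -> x \in J -> lprin x \subset J.
Proof. by move=> idJ xJ; apply/subsetP => _ /lprinP[r ->]; apply: idealM. Qed.

Lemma lprin_neq0 x : x != 0 -> lprin x != [set 0].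
Proof. by apply: contraNneq => Rx0; move: (lprin_refl x); rewrite Rx0 inE. Qed.

Lemma minimal_eq M J : minimal_left_ideal M ->
  left_ideal J -> J \subset M -> J != [set 0] -> J = M.
Proof.
case/and3P => _ _ /forallP minM idJ JM J0; apply/eqP; rewrite eqEproper JM /=.
by apply: contra J0 => JltM; apply: (implyP (minM J)); rewrite idJ.
Qed.

Lemma minimal_lprin M m : minimal_left_ideal M -> m \in M -> m != 0 -> M = lprin m.
Proof.
move=> minM mM m0; have /and3P[idM _ _] := minM.
by rewrite (minimal_eq minM (lprin_ideal m)) ?lprin_sub ?lprin_neq0.
Qed.

Lemma lprin_minimal m : m != 0 ->
  (forall y, y \in lprin m -> y != 0 -> m \in lprin y) -> minimal_left_ideal (lprin m).
Proof.
move=> m0 gen; rewrite /minimal_left_ideal lprin_ideal lprin_neq0 //=.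
apply/forallP => J; apply/implyP => /andP[idJ JltRm]; apply/negPn/negP => J0.
have [y yJ y0] := ideal_neq0 idJ J0.
have mJ : m \in J.
  by apply: subsetP (lprin_sub idJ yJ) _ (gen y (subsetP (proper_sub JltRm) y yJ) y0).
by move: JltRm; rewrite properE (lprin_sub idJ mJ) andbF.
Qed.

Lemma exists_minimal I : left_ideal I -> I != [set 0] ->
  exists2 M, minimal_left_ideal M & M \subset I.
Proof.
move=> idI I0; pose P J := [&& left_ideal J, J \subset I & J != [set 0]].
have PI : P I by rewrite /P idI subxx I0.
case: (arg_minnP (fun J => #|J|) PI) => M /and3P[idM MI M0] Mmin.
exists M => //; apply/and3P; split => //; apply/forallP => J.
apply/implyP => /andP[idJ JltM]; apply/negPn/negP => J0.
have /Mmin : P J by rewrite /P idJ J0 (subset_trans (proper_sub JltM) MI).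
by rewrite leqNgt proper_card.
Qed.

Lemma socP x : reflect (forall J, left_ideal J ->
   (forall M, minimal_left_ideal M -> M \subset J) -> x \in J) (x \in left_soc S).
Proof.
apply: (iffP bigcapP) => socx J.
- by move=> idJ minJ; apply: socx; rewrite idJ; apply/forall_inP => M /minJ.
- by case/andP => idJ /forall_inP minJ; apply: socx => // M /minJ.
Qed.

Lemma soc_ideal : left_ideal (left_soc S).
Proof.
apply: left_idealI.
- by apply/socP => J /left_idealP[].
- move=> x y /socP xs /socP ys; apply/socP => J idJ minJ.
  by case/left_idealP: (idJ) => _ JD _ _; apply: JD; [apply: xs | apply: ys].
- move=> x /socP xs; apply/socP => J idJ minJ.
  by case/left_idealP: (idJ) => _ _ JN _; apply: JN; apply: xs.
- move=> r x /socP xs; apply/socP => J idJ minJ.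
  exact: idealM idJ (xs J idJ minJ).
Qed.

Lemma minimal_sub_soc M : minimal_left_ideal M -> M \subset left_soc S.
Proof.
by move=> minM; apply/subsetP => x xM; apply/socP => J _ /(_ M minM)/subsetP; apply.
Qed.

Lemma soc_sub J : left_ideal J -> (forall M, minimal_left_ideal M -> M \subset J) ->
  left_soc S \subset J.
Proof. by move=> idJ minJ; apply/subsetP => x /socP; apply. Qed.

Definition ann m : {set S} := [set s | s * m == 0].

Lemma ann_ideal m : left_ideal (ann m).
Proof.
apply: left_idealI; rewrite ?inE ?mul0r //.
- by move=> x y; rewrite !inE mulrDl => /eqP-> /eqP->; rewrite addr0.
- by move=> x; rewrite !inE mulNr => /eqP->; rewrite oppr0.
- by move=> r x; rewrite !inE -mulrA => /eqP->; rewrite mulr0.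
Qed.

Lemma card_quot_ann m : card_quot (ann m) = #|lprin m|.
Proof.
apply: card_image_fibres => x y; split => [Exy | Exym].
  have : y \in [set x + r | r in ann m] by rewrite Exy; apply/imsetP; exists 0;
    rewrite ?addr0 // inE mul0r.
  by case/imsetP => r /[!inE] /eqP rm0 ->; rewrite mulrDl rm0 addr0.
apply/setP => z; suff sub u v : u * m = v * m ->
    z \in [set u + r | r in ann m] -> z \in [set v + r | r in ann m].
  by apply/idP/idP; apply: sub.
move=> Euv /imsetP[r rm ->]; apply/imsetP; exists (u - v + r).
  by move: rm; rewrite !inE !mulrDl mulNr Euv subrr add0r.
by rewrite addrA (addrC v) subrK.
Qed.

Lemma ideal_mulr J m : left_ideal J -> left_ideal [set l * m | l in J].
Proof.
case/left_idealP => J0 JD JN JM; apply: left_idealI.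
- by apply/imsetP; exists 0; rewrite ?mul0r.
- move=> _ _ /imsetP[a aJ ->] /imsetP[b bJ ->].
  by apply/imsetP; exists (a + b); rewrite ?mulrDl ?JD.
- by move=> _ /imsetP[a aJ ->]; apply/imsetP; exists (- a); rewrite ?mulNr ?JN.
- by move=> r _ /imsetP[a aJ ->]; apply/imsetP; exists (r * a); rewrite ?mulrA ?JM.
Qed.

Lemma ideal_sum J (I : finType) (F : I -> S) :
  left_ideal J -> (forall k, F k \in J) -> \sum_k F k \in J.
Proof.
by case/left_idealP => J0 JD _ _ FJ; apply: (big_ind (fun z => z \in J)) => // k _.
Qed.

End LeftIdeals.

(* A homogeneous weight is uniquely determined by its defining properties:
   by strong induction on |R x|, since sum over R x splits into the elements
   generating R x (all of weight w x) and those generating smaller ideals. *)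
Lemma homogeneous_weight_unique (S : finPzRingType) (w1 w2 : S -> rat) :
  homogeneous_weight w1 -> homogeneous_weight w2 -> forall x, w1 x = w2 x.
Proof.
case=> w1_0 w1_cl w1_sum [w2_0 w2_cl w2_sum] x.
move: (ltnSn #|lprin x|); move: {2}(#|lprin x|.+1) => N.
elim: N x => // N IH x RxN; case: (eqVneq x 0) => [-> | x0]; first by rewrite w1_0 w2_0.
have : \sum_(y in lprin x) (w1 y - w2 y) = 0 by rewrite sumrB w1_sum // w2_sum // subrr.
rewrite (bigID (fun y => lprin y == lprin x)) /= [X in _ + X]big1 ?addr0; last first.
  move=> y /andP[yx Ry_neq]; apply/eqP; rewrite subr_eq0; apply/eqP/IH.
  rewrite -ltnS; apply: leq_trans _ RxN; rewrite ltnS; apply: proper_card.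
  by rewrite properEneq Ry_neq lprin_sub ?lprin_ideal.
rewrite (eq_bigr (fun _ => w1 x - w2 x)) => [|y /andP[_ /eqP Ey]]; last first.
  by rewrite (w1_cl _ _ Ey) (w2_cl _ _ Ey).
rewrite sumr_const => /eqP; rewrite mulrn_eq0 subr_eq0 => /orP[/eqP/card0_eq/(_ x)|/eqP //].
by rewrite unfold_in /= lprin_refl eqxx.
Qed.

(* The co-weight of a local ring S with socle of size q: with c = soc_coef q,
   coweight c is 1 - w for the homogeneous weight w of S (it is 1 at 0,
   -1/(q-1) on the nonzero socle elements and 0 elsewhere). *)
Definition soc_coef (q : nat) : rat := - ((q.-1)%:R)^-1.

Definition coweight (S : finPzRingType) (c : rat) (v : S) : rat :=
  if v == 0 then 1 else if v \in left_soc S then c else 0.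

Lemma coweight0 (S : finPzRingType) c : coweight c (0 : S) = 1.
Proof. by rewrite /coweight eqxx. Qed.

Lemma coweight_lprin (S : finPzRingType) c (u v : S) :
  u \in lprin v -> v \in lprin u -> coweight c u = coweight c v.
Proof.
move=> /lprinP[r Eu] /lprinP[s Ev]; rewrite /coweight.
have -> : (u == 0) = (v == 0).
  by apply/eqP/eqP => [u0|v0]; [rewrite Ev u0 mulr0 | rewrite Eu v0 mulr0].
have -> // : (u \in left_soc S) = (v \in left_soc S).
by apply/idP/idP => ?; [rewrite Ev | rewrite Eu]; apply: idealM (soc_ideal S) _.
Qed.

Lemma soc_coef2 : soc_coef 2 = -1.
Proof. by rewrite /soc_coef invr1. Qed.

Lemma soc_coef_neq0 q : (1 < q)%N -> soc_coef q != 0.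
Proof. by case: q => [|[|q]] // _; rewrite /soc_coef oppr_eq0 invr_eq0 pnatr_eq0. Qed.

Lemma norm_soc_coef q : (1 < q)%N -> `|soc_coef q| = ((q.-1)%:R)^-1.
Proof. by move=> q_gt1; rewrite /soc_coef normrN normfV normr_nat. Qed.

Lemma norm_coweight_le1 (S : finPzRingType) q (v : S) :
  (1 < q)%N -> `|coweight (soc_coef q) v| <= 1.
Proof.
move=> q_gt1; rewrite /coweight; case: ifP => _; first by rewrite normr1.
case: ifP => _; last by rewrite normr0.
by rewrite norm_soc_coef // invf_le1 ?ltr0n ?ler1n; case: q q_gt1 => [|[]].
Qed.

Lemma norm_soc_coef_eq1 q : (1 < q)%N -> `|soc_coef q| = 1 -> q = 2%N.
Proof.
move=> q_gt1; rewrite norm_soc_coef // => /eqP; rewrite invr_eq1 pnatr_eq1.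
by case: q q_gt1 => [|[|[]]].
Qed.

Lemma coweight_soc (S : finPzRingType) c (m : S) :
  m \in left_soc S -> m != 0 -> coweight c m = c.
Proof. by move=> ms m0; rewrite /coweight (negPf m0) ms. Qed.

Lemma coweight_eq0 (S : finPzRingType) c (v : S) :
  c != 0 -> (coweight c v == 0) = (v \notin left_soc S).
Proof.
move=> c0; rewrite /coweight; have [-> | v0] := eqVneq v 0.
  by rewrite oner_eq0 ideal0 ?soc_ideal.
by case: ifP => _; rewrite ?(negPf c0) ?eqxx.
Qed.


Section LocalRing.
Variables (S : finPzRingType) (q : nat).
Hypothesis S_local : local_ring S.
Hypothesis card_residue : card_quot (jac_rad S) = q.
Hypothesis card_soc : #|left_soc S| = q.
Implicit Types (M : {set S}) (m y : S).

Lemma maximal_rad M : maximal_left_ideal M = (M == jac_rad S).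
Proof.
have [J0 maxJ0] := cards1P S_local.
have maxE M' : maximal_left_ideal M' = (M' == J0).
  by have := congr1 (fun A : {set {set S}} => M' \in A) maxJ0; rewrite /= !inE.
by rewrite maxE /jac_rad (eq_bigl _ _ maxE) big_pred1_eq.
Qed.

Lemma local_oner_neq0 : (1 : S) != 0.
Proof.
apply/negP => /eqP one0; have /and3P[idrad radT _] : maximal_left_ideal (jac_rad S).
  by rewrite maximal_rad.
case/negP: radT; apply/eqP/setP => x; rewrite !inE.
by rewrite -(mulr1 x) one0 mulr0 ideal0.
Qed.

Lemma ann_maximal m : m != 0 -> minimal_left_ideal (lprin m) ->
  maximal_left_ideal (ann m).
Proof.
move=> m0 minRm; rewrite /maximal_left_ideal ann_ideal /=; apply/andP; split.
  apply: contra m0 => /eqP annT; have : (1 : S) \in ann m by rewrite annT inE.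
  by rewrite inE mul1r.
apply/forallP => J; apply/implyP => /andP[idJ annJ].
have [l lJ lm0] : exists2 l, l \in J & l * m != 0.
  by case/properP: annJ => _ [l lJ]; rewrite inE => lm0; exists l.
have Jm : [set l * m | l in J] = lprin m.
  apply: minimal_eq minRm (ideal_mulr m idJ) _ _.
    by apply/subsetP => _ /imsetP[l' _ ->]; apply/lprinP; exists l'.
  apply: contra lm0 => /eqP Jm0; have : l * m \in [set l * m | l in J] by apply: imset_f.
  by rewrite Jm0 inE.
have /imsetP[l' l'J Em] : m \in [set l * m | l in J] by rewrite Jm lprin_refl.
have : 1 - l' \in J.
  by apply: (subsetP (proper_sub annJ)); rewrite inE mulrBl mul1r -Em subrr.
case/left_idealP: idJ => _ JD _ JM => /JD /(_ l'J); rewrite subrK => oneJ.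
by apply/eqP/setP => x; rewrite inE -(mulr1 x) JM.
Qed.

(* Every minimal left ideal S m is isomorphic to S / ann m = S / rad S. *)
Lemma card_minimal M : minimal_left_ideal M -> #|M| = q.
Proof.
move=> minM; have /and3P[idM M0 _] := minM.
have [m mM m0] := ideal_neq0 idM M0; have minRm := minM.
rewrite (minimal_lprin minM mM m0) in minRm *.
have /eqP annE : ann m == jac_rad S by rewrite -maximal_rad ann_maximal.
by rewrite -card_quot_ann annE.
Qed.

(* Hence the socle, of size q, is the unique minimal left ideal. *)
Lemma soc_minimal M : minimal_left_ideal M -> left_soc S = M.
Proof.
move=> minM; apply/eqP; rewrite eq_sym eqEcard minimal_sub_soc //.
by rewrite card_soc (card_minimal minM) leqnn.
Qed.

Lemma soc_sub_lprin y : y != 0 -> left_soc S \subset lprin y.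
Proof.
move=> y0; have [M minM MRy] := exists_minimal (lprin_ideal y) (lprin_neq0 y0).
by rewrite (soc_minimal minM).
Qed.

Lemma soc_neq0 : exists2 m, m \in left_soc S & m != 0.
Proof.
have [M minM _] := exists_minimal (lprin_ideal 1) (lprin_neq0 local_oner_neq0).
by have /and3P[idM M0 _] := minM; rewrite (soc_minimal minM); apply: ideal_neq0.
Qed.

Lemma card_soc_gt1 : (1 < q)%N.
Proof.
have [m ms m0] := soc_neq0.
have sub : [set 0; m] \subset left_soc S by rewrite subUset !sub1set ms ideal0 ?soc_ideal.
by rewrite -card_soc; apply: leq_trans (subset_leq_card sub); rewrite cards2 eq_sym m0.
Qed.

(* The co-weight sums to 0 over every nonzero principal left ideal: R y
   contains the socle, which carries 1 + (q - 1) * (-1/(q - 1)) = 0. *)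
Lemma sum_coweight y : y != 0 -> \sum_(v in lprin y) coweight (soc_coef q) v = 0.
Proof.
move=> y0; have soc0 : (0 : S) \in left_soc S by rewrite ideal0 ?soc_ideal.
rewrite (big_setID (left_soc S)) /= (setIidPr (soc_sub_lprin y0)).
rewrite [X in _ + X]big1 ?addr0 => [|v /setDP[_ vs]]; last first.
  by rewrite /coweight (negPf vs); case: eqP vs => // ->; rewrite soc0.
rewrite (big_setD1 0) //= coweight0 (eq_bigr (fun _ => soc_coef q)) => [|v /setD1P[v0 vs]].
  rewrite sumr_const; have -> : #|left_soc S :\ 0| = q.-1.
    by have := cardsD1 0 (left_soc S); rewrite soc0 card_soc add1n => ->.
  rewrite /soc_coef mulNrn -[_^-1 *+ _]mulr_natr mulVf ?subrr // pnatr_eq0.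
  by case: q card_soc_gt1 => [|[]].
by rewrite /coweight (negPf v0) vs.
Qed.

End LocalRing.

Section ProductRing.
Variables (R : finPzRingType) (I : finType) (S : I -> finPzRingType).
Variable p : forall k, {rmorphism R -> S k}.
Hypothesis p_inj : forall x y : R, (forall k, p k x = p k y) -> x = y.
Hypothesis p_surj : forall g : (forall k, S k), exists x : R, forall k, p k x = g k.
Implicit Types (x y : R) (k : I) (w : R -> rat).

Lemma exists_glue (g : forall k, S k) : exists x, [forall k, p k x == g k].
Proof. by have [x xg] := p_surj g; exists x; apply/forallP => k; rewrite xg. Qed.

Definition glue (g : forall k, S k) : R := xchoose (exists_glue g).

Lemma p_glue g k : p k (glue g) = g k.
Proof. exact/eqP/(forallP (xchooseP (exists_glue g))). Qed.

Definition embed k0 (s : S k0) : R := glue (dfwith (fun k => 0 : S k) s).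

Lemma p_embed k0 (s : S k0) : p k0 (embed s) = s.
Proof. by rewrite p_glue dfwith_in. Qed.

Lemma p_embed_out k0 (s : S k0) k : k0 != k -> p k (embed s) = 0.
Proof. by move=> k0k; rewrite p_glue dfwith_out. Qed.

Lemma p0 k : p k 0 = 0. Proof. exact: rmorph0. Qed.

Lemma eq_at k0 x y : (forall k, k0 != k -> p k x = 0) ->
  (forall k, k0 != k -> p k y = 0) -> p k0 x = p k0 y -> x = y.
Proof.
move=> x0 y0 xy; apply: p_inj => k; case: (eqVneq k0 k) => [<- // | k0k].
by rewrite x0 ?y0.
Qed.

Lemma embed0 k0 : embed (0 : S k0) = 0.
Proof. by apply: (eq_at (k0 := k0)) => [k /p_embed_out|k _|]; rewrite ?p0 ?p_embed. Qed.

Lemma embed_eq0 k0 (s : S k0) : (embed s == 0) = (s == 0).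
Proof. by apply/eqP/eqP => [es0 | ->]; [rewrite -(p_embed s) es0 p0 | apply: embed0]. Qed.

Lemma mul_embed k0 (s : S k0) r : r * embed s = embed (p k0 r * s).
Proof.
apply: (eq_at (k0 := k0)) => [k k0k|k /p_embed_out //|].
  by rewrite rmorphM p_embed_out // mulr0.
by rewrite rmorphM !p_embed.
Qed.

Lemma embed_mul k0 (s : S k0) y : embed s * y = embed (s * p k0 y).
Proof.
apply: (eq_at (k0 := k0)) => [k k0k|k /p_embed_out //|].
  by rewrite rmorphM p_embed_out // mul0r.
by rewrite rmorphM !p_embed.
Qed.

Lemma sum_embed x : x = \sum_k embed (p k x).
Proof.
apply: p_inj => k; rewrite rmorph_sum (bigD1 k) //= p_embed big1 ?addr0 // => k' k'k.
by rewrite p_embed_out.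
Qed.

Lemma nonzero_component x : x != 0 -> exists k, p k x != 0.
Proof.
move=> x0; apply/existsP; apply: contraR x0 => /existsPn p_x0.
by apply/eqP/p_inj => k; rewrite p0; apply/eqP/negbNE.
Qed.

Lemma lprin_prod x y : (y \in lprin x) = [forall k, p k y \in lprin (p k x)].
Proof.
apply/idP/forallP => [/lprinP[r ->] k | yx].
  by apply/lprinP; exists (p k r); rewrite rmorphM.
have r_ k : exists r, p k y == r * p k x by have /lprinP[r ->] := yx k; exists r.
apply/lprinP; exists (glue (fun k => xchoose (r_ k))).
by apply: p_inj => k; rewrite rmorphM p_glue; apply/eqP/(xchooseP (r_ k)).
Qed.

Variable q : I -> nat.
Hypothesis S_local : forall k, local_ring (S k).
Hypothesis card_residue : forall k, card_quot (jac_rad (S k)) = q k.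
Hypothesis card_soc : forall k, #|left_soc (S k)| = q k.

Lemma factor_soc_sub k (y : S k) : y != 0 -> left_soc (S k) \subset lprin y.
Proof. exact: (soc_sub_lprin (S_local k) (card_residue k) (card_soc k)). Qed.

Lemma factor_soc_neq0 k : exists2 m, m \in left_soc (S k) & m != 0.
Proof. exact: soc_neq0 (S_local k) (card_residue k) (card_soc k). Qed.

Lemma factor_q_gt1 k : (1 < q k)%N.
Proof. exact: card_soc_gt1 (S_local k) (card_residue k) (card_soc k). Qed.

Definition soc_prod : {set R} := [set x | [forall k, p k x \in left_soc (S k)]].

Lemma soc_prodP x : reflect (forall k, p k x \in left_soc (S k)) (x \in soc_prod).
Proof. by rewrite inE; apply: forallP. Qed.

Lemma soc_prod_ideal : left_ideal soc_prod.
Proof.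
apply: left_idealI.
- by apply/soc_prodP => k; rewrite p0 ideal0 ?soc_ideal.
- move=> x y /soc_prodP xs /soc_prodP ys; apply/soc_prodP => k; rewrite rmorphD.
  by case/left_idealP: (soc_ideal (S k)) => _ sD _ _; apply: sD (xs k) (ys k).
- move=> x /soc_prodP xs; apply/soc_prodP => k; rewrite rmorphN.
  by case/left_idealP: (soc_ideal (S k)) => _ _ sN _; apply: sN (xs k).
- move=> r x /soc_prodP xs; apply/soc_prodP => k; rewrite rmorphM.
  exact: idealM (soc_ideal _) (xs k).
Qed.

Lemma embed_soc k0 (s : S k0) : s \in left_soc (S k0) -> embed s \in soc_prod.
Proof.
move=> ss; apply/soc_prodP => k; case: (eqVneq k0 k) => [<- | k0k].
  by rewrite p_embed.
by rewrite p_embed_out // ideal0 ?soc_ideal.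
Qed.

(* A nonzero socle element of a factor, embedded, generates a minimal left
   ideal of R: the socle of S k0 lies in every nonzero principal ideal. *)
Lemma embed_minimal k0 (s : S k0) : s \in left_soc (S k0) -> s != 0 ->
  minimal_left_ideal (lprin (embed s)).
Proof.
move=> ss s0; apply: lprin_minimal; first by rewrite embed_eq0.
move=> _ /lprinP[r ->]; rewrite mul_embed embed_eq0 => s'0.
have /lprinP[r' Es] := subsetP (factor_soc_sub s'0) s ss.
by apply/lprinP; exists (embed r'); rewrite embed_mul p_embed -Es.
Qed.

Lemma minimal_sub_soc_prod M : minimal_left_ideal M -> M \subset soc_prod.
Proof.
move=> minM; have /and3P[idM M0 _] := minM; have [z zM z0] := ideal_neq0 idM M0.
have [k zk0] := nonzero_component z0; have [m ms m0] := factor_soc_neq0 k.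
have /lprinP[s Em] := subsetP (factor_soc_sub zk0) m ms.
have uM : embed s * z \in M by apply: idealM.
have u0 : embed s * z != 0 by rewrite embed_mul -Em embed_eq0.
rewrite (minimal_lprin minM uM u0); apply: lprin_sub soc_prod_ideal _.
by rewrite embed_mul -Em embed_soc.
Qed.

Lemma soc_prodE : left_soc R = soc_prod.
Proof.
apply/eqP; rewrite eqEsubset soc_sub ?soc_prod_ideal //=; last exact: minimal_sub_soc_prod.
apply/subsetP => x /soc_prodP xs; rewrite [x]sum_embed; apply: ideal_sum (soc_ideal R) _ => k.
case: (eqVneq (p k x) 0) => [-> | xk0]; first by rewrite embed0 ideal0 ?soc_ideal.
exact: subsetP (minimal_sub_soc (embed_minimal (xs k) xk0)) _ (lprin_refl _).
Qed.

Lemma embed_lprin k0 x (s : S k0) : s \in lprin (p k0 x) -> embed s \in lprin x.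
Proof. by case/lprinP=> r ->; apply/lprinP; exists (embed r); rewrite embed_mul. Qed.

(* The product of the co-weights of the components; we show 1 - prod_coweight
   is the homogeneous weight of R. *)
Definition prod_coweight x : rat := \prod_k coweight (soc_coef (q k)) (p k x).

Lemma prod_coweight0 : prod_coweight 0 = 1.
Proof. by apply: big1 => k _; rewrite p0 coweight0. Qed.

Lemma prod_coweight_lprin x y : lprin x = lprin y -> prod_coweight x = prod_coweight y.
Proof.
move=> Exy; have yx : y \in lprin x by rewrite Exy lprin_refl.
have xy : x \in lprin y by rewrite -Exy lprin_refl.
rewrite !lprin_prod in yx xy; apply: eq_bigr => k _.
by apply: coweight_lprin; [apply: (forallP xy k) | apply: (forallP yx k)].
Qed.

Lemma prod_coweight_add_embed k0 a (s : S k0) : p k0 a = 0 ->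
  prod_coweight (a + embed s) = prod_coweight a * coweight (soc_coef (q k0)) s.
Proof.
move=> ak0; rewrite /prod_coweight (bigD1 k0) //= [in RHS](bigD1 k0) //=.
rewrite rmorphD p_embed ak0 add0r coweight0 mul1r mulrC; congr (_ * _).
by apply: eq_bigr => k kk0; rewrite rmorphD p_embed_out ?addr0 // eq_sym.
Qed.

Lemma prod_coweight_single k0 a : (forall k, k0 != k -> p k a = 0) ->
  prod_coweight a = coweight (soc_coef (q k0)) (p k0 a).
Proof.
move=> a_out; have Ea : a = 0 + embed (p k0 a).
  apply: (eq_at (k0 := k0)) => [k /a_out // | k k0k |].
    by rewrite add0r p_embed_out.
  by rewrite add0r p_embed.
by rewrite {1}Ea prod_coweight_add_embed ?p0 // prod_coweight0 mul1r.
Qed.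

(* For x with a nonzero component at k0, R x is the direct product of its
   elements vanishing at k0 and of the embedded ideal S_k0 x_k0; the sum of
   co-weights factors and the second factor vanishes by sum_coweight. *)
Lemma sum_prod_coweight x : x != 0 -> \sum_(y in lprin x) prod_coweight y = 0.
Proof.
move=> x0; have [k0 xk0] := nonzero_component x0.
set A := [set a in lprin x | p k0 a == 0]; set B := lprin (p k0 x).
pose f (u : R * S k0) := u.1 + embed u.2.
have f_inj : {in setX A B &, injective f}.
  move=> [a s] [a' s'] /setXP[/setIdP[_ /eqP a0] _] /setXP[/setIdP[_ /eqP a'0] _] /= E.
  have Es : s = s' by have := congr1 (p k0) E; rewrite !rmorphD a0 a'0 !p_embed !add0r.
  by move: E; rewrite /f /= Es => /addIr ->.
have f_im : f @: setX A B = lprin x.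
  have [_ RxD RxN _] := left_idealP (lprin_ideal x).
  apply/setP => y; apply/imsetP/idP => [[[a s] /setXP[/setIdP[ax _] sB] ->] | yx].
    by rewrite /f RxD ?embed_lprin.
  have yk0 : p k0 y \in B by move: yx; rewrite lprin_prod => /forallP.
  exists (y - embed (p k0 y), p k0 y); last by rewrite /f /= subrK.
  by rewrite !inE RxD ?RxN ?embed_lprin //= rmorphB p_embed subrr eqxx.
rewrite -f_im big_imset //= (eq_bigl (fun u => (u.1 \in A) && (u.2 \in B))) => [|[a s]].
  rewrite -(pair_big_dep (mem A) (fun _ => mem B) (fun a s => prod_coweight (a + embed s))).
  apply: big1 => a /setIdP[_ /eqP ak0].
  under eq_bigr => s _ do rewrite prod_coweight_add_embed //.
  by rewrite -mulr_sumr (sum_coweight (S_local k0) (card_residue k0) (card_soc k0) xk0) mulr0.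
exact: in_setX.
Qed.

Lemma homogeneous_coweight : homogeneous_weight (fun x => 1 - prod_coweight x).
Proof.
split=> [|x y Exy|x x0]; first by rewrite prod_coweight0 subrr.
  by rewrite (prod_coweight_lprin Exy).
by rewrite sumrB sum_prod_coweight // subr0 sumr_const.
Qed.

Lemma weightE w : homogeneous_weight w -> forall x, w x = 1 - prod_coweight x.
Proof. by move=> w_hom; apply: homogeneous_weight_unique w_hom homogeneous_coweight. Qed.

Lemma prod_coweight_eq0 x : (prod_coweight x == 0) = (x \notin left_soc R).
Proof.
have coef0 k : soc_coef (q k) != 0 by apply/soc_coef_neq0/factor_q_gt1.
rewrite soc_prodE; apply/prodf_eq0/idP => [[k _] | ].
  by rewrite coweight_eq0 // => xk; apply: contra xk => /soc_prodP; apply.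
by rewrite inE negb_forall => /existsP[k xk]; exists k; rewrite ?coweight_eq0.
Qed.

Lemma weight_eq1 w x : homogeneous_weight w -> (w x == 1) = (x \notin left_soc R).
Proof.
by move=> w_hom; rewrite weightE // -subr_eq0 addrAC subrr add0r oppr_eq0 prod_coweight_eq0.
Qed.

Lemma soc_weight_neq1 w a : homogeneous_weight w -> a \in left_soc R -> w a <> 1.
Proof. by move=> w_hom a_soc /eqP; rewrite weight_eq1 // a_soc. Qed.

Lemma nonsoc_block w : homogeneous_weight w ->
  left_soc R != [set: R] -> ~: left_soc R \in Phom w.
Proof.
move=> w_hom socT; have /subsetPn[x0 _ x0s] : ~~ ([set: R] \subset left_soc R).
  by rewrite subTset.
apply/imsetP; exists x0 => //; apply/setP => y.
have /eqP -> : w x0 == 1 by rewrite weight_eq1.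
by rewrite !inE weight_eq1.
Qed.

Lemma support_q2 a k : prod_coweight a = 1 -> p k a != 0 -> q k = 2%N.
Proof.
move=> Ga1 ak0.
have le1 k' : `|coweight (soc_coef (q k')) (p k' a)| <= 1.
  exact: norm_coweight_le1 (factor_q_gt1 k').
have := prod_norm_eq1 le1 _ k; rewrite -/(prod_coweight a) Ga1 normr1 => /(_ erefl).
rewrite /coweight (negPf ak0); case: ifP => _; first exact: norm_soc_coef_eq1 (factor_q_gt1 k).
by rewrite normr0 => /eqP; rewrite eq_sym oner_eq0.
Qed.

(* A single nonzero component would give prod_coweight a = -1, so two
   distinct components are nonzero, both in factors with q = 2. *)
Lemma two_q2_of_coweight1 a : a != 0 -> prod_coweight a = 1 ->
  exists k1 k2, [/\ k1 != k2, q k1 = 2%N & q k2 = 2%N].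
Proof.
move=> a0 Ga1; have [k0 ak0] := nonzero_component a0.
have [k1 /andP[k01 ak1] | only_k0] := pickP [pred k | (k0 != k) && (p k a != 0)].
  by exists k0, k1; rewrite k01 !(support_q2 Ga1).
have : prod_coweight a = coweight (soc_coef (q k0)) (p k0 a).
  apply: prod_coweight_single => k k0k.
  by apply/eqP; move: (only_k0 k); rewrite /= k0k => /negbFE.
rewrite Ga1 /coweight (negPf ak0) (support_q2 Ga1 ak0) soc_coef2.
by case: ifP => _ /eqP.
Qed.

Lemma coweight1_of_two_q2 k1 k2 : k1 != k2 -> q k1 = 2%N -> q k2 = 2%N ->
  exists2 a, a != 0 & prod_coweight a = 1.
Proof.
move=> k12 q1 q2; have k21 : k2 != k1 by rewrite eq_sym.
have [m1 m1s m10] := factor_soc_neq0 k1.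
have [m2 m2s m20] := factor_soc_neq0 k2.
exists (embed m2 + embed m1).
  apply: contra m10 => /eqP a0; have := congr1 (p k1) a0.
  by rewrite rmorphD p_embed_out // p_embed add0r p0 => ->.
rewrite prod_coweight_add_embed ?p_embed_out // (prod_coweight_single (k0 := k2)).
  by rewrite p_embed !coweight_soc // q1 q2 soc_coef2 mulrNN mulr1.
by move=> k /p_embed_out.
Qed.

Lemma weight0_iff w : homogeneous_weight w ->
  (exists a, a != 0 /\ w a = 0) <-> exists k1 k2, [/\ k1 != k2, q k1 = 2%N & q k2 = 2%N].
Proof.
move=> w_hom; have w0 a : w a = 0 <-> prod_coweight a = 1.
  rewrite weightE //; split=> [/eqP | ->]; last by rewrite subrr.
  by rewrite subr_eq0 => /eqP <-.
split=> [[a [a0 /w0 Ga1]] | [k1 [k2 [k12 q1 q2]]]]; first exact: two_q2_of_coweight1 a0 Ga1.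
by have [a a0 Ga1] := coweight1_of_two_q2 k12 q1 q2; exists a; split => //; apply/w0.
Qed.

Theorem product_weight_theorem w : homogeneous_weight w ->
  [/\ forall a, a \in left_soc R -> w a <> 1,
      left_soc R != [set: R] -> ~: left_soc R \in Phom w &
      (exists a, a != 0 /\ w a = 0) <->
      exists k1 k2, [/\ k1 != k2, q k1 = 2%N & q k2 = 2%N]].
Proof.
move=> w_hom; split; [by move=> a; apply: soc_weight_neq1 | exact: nonsoc_block |].
exact: weight0_iff.
Qed.

End ProductRing.

(* Additive characters of a finite ring take values of modulus 1, since every
   element has finite additive order. *)
Lemma norm_char (S : finPzRingType) (chi : S -> algC) :
  is_char chi -> forall z, `|chi z| = 1.
Proof.
case=> chi0 chiD z; pose U : finZmodType := S.
have chiX k : chi (z *+ k) = chi z ^+ k.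
  by elim: k => [|k IH]; rewrite ?mulr0n ?expr0 // mulrS chiD IH exprS.
have : chi z ^+ #[z : U]%g = 1 by rewrite -chiX -FinRing.zmodXgE expg_order.
move/(congr1 Num.norm); rewrite normrX normr1 => /eqP.
by rewrite pexpr_eq1 ?normr_ge0 ?order_gt0 // => /eqP.
Qed.

(* If a nonzero a has the weight of 0, the partition is not reflexive: the
   block of a contains 0, so a and 0 would be equivalent for the left dual of
   the right dual; summing chi over the right-dual block of any b forces
   chi (b a) = 1, i.e. x |-> chi (x a) is the character of 0, and a = 0. *)
Lemma nonreflexive_weight_collision (S : finPzRingType) (w : S -> rat) chi a :
  generating_char chi -> a != 0 -> w a = w 0 -> ~ reflexive_partition chi (Phom w).
Proof.
move=> [chi_char [chi_inj _]] a0 wa0 refl; have [chi0 _] := chi_char.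
have : [set y | w y == w a] \in ldual chi (rdual chi (Phom w)) by rewrite refl imset_f.
case/imsetP => c _ Ec.
have c_0 : 0 \in [set y | w y == w a] by rewrite inE wa0.
have c_a : a \in [set y | w y == w a] by rewrite inE.
rewrite Ec !inE in c_0 c_a; move/forall_inP: c_0 => c_0; move/forall_inP: c_a => c_a.
have chi_a1 b : chi (b * a) = 1.
  set D := [set a' | [forall B in Phom w,
    \sum_(x in B) chi (b * x) == \sum_(x in B) chi (a' * x)]].
  have Dd : D \in rdual chi (Phom w) by apply: imset_f.
  have bD : b \in D by rewrite inE; apply/forall_inP.
  have sumD : \sum_(x in D) chi (x * a) = \sum_(x in D) 1.
    rewrite -(eqP (c_a D Dd)) (eqP (c_0 D Dd)).
    by apply: eq_bigr => x _; rewrite mulr0 chi0.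
  by apply: (normC_sum_upper _ sumD) => // x _; rewrite norm_char.
have /chi_inj/eqP : (fun x => chi (x * a)) = (fun x => chi (x * 0)).
  by apply: functional_extensionality => x; rewrite chi_a1 mulr0 chi0.
by rewrite (negPf a0).
Qed.

Lemma two_q2_blocks (t : nat) (n q : 'I_t -> nat) : injective q ->
  (exists k1 k2 : {i : 'I_t & 'I_(n i)},
     [/\ k1 != k2, q (tag k1) = 2%N & q (tag k2) = 2%N]) <->
  (exists i, q i = 2%N /\ (2 <= n i)%N).
Proof.
move=> q_inj; split=> [[[i j1] [[i' j2] [k12 /= qi qi']]] | [i [qi n_ge2]]].
  have Ei : i' = i by apply: q_inj; rewrite qi qi'.
  subst i'; exists i; split=> //; rewrite eq_Tagged in k12.
  by have := max_card [set j1; j2]; rewrite cards2 k12 card_ord.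
exists (Tagged (fun i => 'I_(n i)) (Ordinal (ltnW n_ge2))).
exists (Tagged (fun i => 'I_(n i)) (Ordinal n_ge2)).
by rewrite eq_Tagged.
Qed.

Theorem mainTheorem7 (R : finPzRingType) (t : nat) (n q : 'I_t -> nat)
  (Rij : forall i : 'I_t, 'I_(n i) -> finPzRingType)
  (pi : forall (i : 'I_t) (j : 'I_(n i)), {rmorphism R -> Rij i j})
  (pi_inj : forall x y : R, (forall i j, pi i j x = pi i j y) -> x = y)
  (pi_surj : forall g : (forall (i : 'I_t) (j : 'I_(n i)), Rij i j),
      exists x : R, forall i j, pi i j x = g i j)
  (q_inj : injective q)
  (Hloc : forall i j, local_ring (Rij i j))
  (Hfrob : forall i j, frobenius (Rij i j))
  (Hrad : forall i j, card_quot (jac_rad (Rij i j)) = q i)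
  (Hsoc : forall i j, #|left_soc (Rij i j)| = q i)
  (w : R -> rat) (Hw : homogeneous_weight w) :
  ((forall a : R, a \in left_soc R -> w a <> 1) /\
   (left_soc R != [set: R] -> ~: left_soc R \in Phom w))
  /\ ((exists a : R, a != 0 /\ w a = 0) <->
      (exists i : 'I_t, q i = 2%N /\ (2 <= n i)%N))
  /\ ((exists i : 'I_t, q i = 2%N /\ (2 <= n i)%N) ->
      forall chi : R -> algC, generating_char chi ->
        ~ reflexive_partition chi (Phom w)).
Proof.
(* View R as the product of the local rings indexed by the pairs (i, j). *)
pose S (k : {i : 'I_t & 'I_(n i)}) := Rij (tag k) (tagged k).
pose p k : {rmorphism R -> S k} := pi (tag k) (tagged k).
have p_inj x y : (forall k, p k x = p k y) -> x = y.
  by move=> Exy; apply: pi_inj => i j; apply: (Exy (Tagged _ j)).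
have p_surj (g : forall k, S k) : exists x, forall k, p k x = g k.
  by have [x xg] := pi_surj (fun i j => g (Tagged _ j)); exists x => -[i j]; apply: xg.
have [soc_neq1 soc_block weight0] := product_weight_theorem p_inj p_surj
  (fun k => Hloc _ _) (fun k => Hrad _ (tagged k)) (fun k => Hsoc _ (tagged k)) Hw.
have weight0E := iff_trans weight0 (two_q2_blocks n q_inj).
split; [by [] | split; first exact: weight0E].
move=> /weight0E[a [a0 wa0]] chi chi_gen.
by apply: nonreflexive_weight_collision chi_gen a0 _; case: Hw wa0 => -> _ _ ->.
Qed.
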